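(* Let $\Sigma$ be a finite set of tgds over a schema $\mathbf R$, and let $\widetilde\Sigma=\{\tilde\xi:\xi\in\Sigma\}$ be its semi-enrichment, where for $\xi=\alpha(\bar x,\bar y)\rightarrow\exists\bar z\,\beta(\bar x,\bar z)$ we set $\tilde\xi=\alpha(\bar x,\bar y)\rightarrow\exists\bar z\,\beta(\bar x,\bar z),H(\bar x)$ with $H$ a new relation symbol not in $\mathbf R$. Then $\Sigma\in\mathsf{CT}^{\mathsf{sobl}}_{\forall\forall}$ if and only if $\widetilde\Sigma\in\mathsf{CT}^{\mathsf{std}}_{\forall\forall}$.
   Context: In a tgd $\alpha(\bar x,\bar y)\rightarrow\exists\bar z\,\beta(\bar x,\bar z)$, $\bar x$ are the variables occurring in both body and head. Instances are finite sets of atoms over constants and nulls. A trigger for tgd $\xi$ on $I$ is $(\xi,h)$ with $h(\alpha)\subseteq I$; it is active if no extension $h'$ of $h$ has $h'(\beta)\subseteq I$; firing it adds $h'(\beta)$ with $h'$ extending $h$ by fresh nulls. A standard chase sequence fires only active triggers; a semi-oblivious chase sequence fires any triggers but never two triggers $(\xi,h),(\xi,g)$ of the same tgd with $h(\bar x)=g(\bar x)$. Infinite sequences are assumed fair; a sequence terminates if it is finite and no further step of the variant is possible. $\mathsf{CT}^{\star}_{\forall\forall}$ is the class of finite tgd sets $\Sigma$ such that for every instance all $\star$-chase sequences with $\Sigma$ terminate. *)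

From Stdlib Require Import List Arith.
Import ListNotations.

Inductive Term : Type := Const (c : nat) | Null (n : nat).

(* Relation symbols: the schema R consists of the symbols [RBase r];
   [RH i] is a fresh symbol (not in R), used as the new symbol H of the
   semi-enrichment of the i-th tgd. *)
Inductive RSym : Type := RBase (r : nat) | RH (i : nat).

Record Atom : Type := mkAtom { arel : RSym; aargs : list Term }.

(* A (finite) instance: a finite set of atoms, represented by a list
   (only membership [In] is ever used). *)
Definition Instance := list Atom.

Record VAtom : Type := mkVAtom { vrel : RSym; vargs : list nat }.

Record TGD : Type := mkTGD { body : list VAtom; head : list VAtom }.

Definition body_vars (xi : TGD) : list nat := flat_map vargs (body xi).
Definition head_vars (xi : TGD) : list nat := flat_map vargs (head xi).

Definition frontier (xi : TGD) : list nat :=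
  nodup Nat.eq_dec
    (filter (fun x => existsb (Nat.eqb x) (head_vars xi)) (body_vars xi)).

Definition inst (h : nat -> Term) (a : VAtom) : Atom :=
  mkAtom (vrel a) (map h (vargs a)).

Definition over_R (xi : TGD) : Prop :=
  (forall a, In a (body xi) -> exists r, vrel a = RBase r) /\
  (forall a, In a (head xi) -> exists r, vrel a = RBase r).

Definition enrich_tgd (i : nat) (xi : TGD) : TGD :=
  mkTGD (body xi) (head xi ++ [mkVAtom (RH i) (frontier xi)]).

Fixpoint enrich_aux (i : nat) (L : list TGD) : list TGD :=
  match L with
  | [] => []
  | xi :: L' => enrich_tgd i xi :: enrich_aux (Datatypes.S i) L'
  end.

Definition semi_enrichment (Sigma : list TGD) : list TGD := enrich_aux 0 Sigma.

Definition Trigger : Type := (nat * (nat -> Term))%type.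

Definition hom_body (xi : TGD) (I : Instance) (h : nat -> Term) : Prop :=
  forall a, In a (body xi) -> In (inst h a) I.

Definition extends_on (xi : TGD) (h' h : nat -> Term) : Prop :=
  forall x, In x (body_vars xi) -> h' x = h x.

Definition satisfied_ext (xi : TGD) (I : Instance) (h : nat -> Term) : Prop :=
  exists h', extends_on xi h' h /\ (forall a, In a (head xi) -> In (inst h' a) I).

Definition null_in (n : nat) (I : Instance) : Prop :=
  exists a, In a I /\ In (Null n) (aargs a).

Definition existential (xi : TGD) (z : nat) : Prop :=
  In z (head_vars xi) /\ ~ In z (body_vars xi).

Definition fires (xi : TGD) (I : Instance) (h : nat -> Term) (J : Instance) : Prop :=
  exists h', extends_on xi h' h /\
    (forall z, existential xi z -> exists n, h' z = Null n /\ ~ null_in n I) /\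
    (forall z1 z2, existential xi z1 -> existential xi z2 -> h' z1 = h' z2 -> z1 = z2) /\
    J = I ++ map (inst h') (head xi).

Definition is_trigger (Sigma : list TGD) (I : Instance) (t : Trigger) : Prop :=
  exists xi, nth_error Sigma (fst t) = Some xi /\ hom_body xi I (snd t).

Definition is_active (Sigma : list TGD) (I : Instance) (t : Trigger) : Prop :=
  exists xi, nth_error Sigma (fst t) = Some xi /\ hom_body xi I (snd t) /\
    ~ satisfied_ext xi I (snd t).

Definition so_equiv (Sigma : list TGD) (t1 t2 : Trigger) : Prop :=
  fst t1 = fst t2 /\
  exists xi, nth_error Sigma (fst t1) = Some xi /\
    map (snd t1) (frontier xi) = map (snd t2) (frontier xi).

Inductive variant : Type := Std | SObl.

(* One chase step with trigger t (local condition only). *)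
Definition step (v : variant) (Sigma : list TGD) (I : Instance) (t : Trigger)
    (J : Instance) : Prop :=
  exists xi, nth_error Sigma (fst t) = Some xi /\ hom_body xi I (snd t) /\
    (v = Std -> ~ satisfied_ext xi I (snd t)) /\
    fires xi I (snd t) J.

Definition valid_fin (v : variant) (Sigma : list TGD) (I0 : Instance) (n : nat)
    (I : nat -> Instance) (t : nat -> Trigger) : Prop :=
  I 0 = I0 /\
  (forall k, k < n -> step v Sigma (I k) (t k) (I (S k))) /\
  (v = SObl -> forall k l, k < l -> l < n -> ~ so_equiv Sigma (t k) (t l)).

Definition valid_inf (v : variant) (Sigma : list TGD) (I0 : Instance)
    (I : nat -> Instance) (t : nat -> Trigger) : Prop :=
  I 0 = I0 /\
  (forall k, step v Sigma (I k) (t k) (I (S k))) /\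
  (v = SObl -> forall k l, k < l -> ~ so_equiv Sigma (t k) (t l)).

Definition can_extend (v : variant) (Sigma : list TGD) (n : nat)
    (I : nat -> Instance) (t : nat -> Trigger) : Prop :=
  exists t' J, step v Sigma (I n) t' J /\
    (v = SObl -> forall k, k < n -> ~ so_equiv Sigma (t k) t').

Definition fair (v : variant) (Sigma : list TGD) (I : nat -> Instance)
    (t : nat -> Trigger) : Prop :=
  match v with
  | Std => forall k tr, is_active Sigma (I k) tr ->
             exists j, k <= j /\ ~ is_active Sigma (I j) tr
  | SObl => forall k tr, is_trigger Sigma (I k) tr ->
             exists j, so_equiv Sigma (t j) tr
  end.

Inductive ChaseSeq : Type :=
  | FinSeq (n : nat) (I : nat -> Instance) (t : nat -> Trigger)
  | InfSeq (I : nat -> Instance) (t : nat -> Trigger).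

Definition is_chase_seq (v : variant) (Sigma : list TGD) (I0 : Instance)
    (s : ChaseSeq) : Prop :=
  match s with
  | FinSeq n Is ts => valid_fin v Sigma I0 n Is ts /\ ~ can_extend v Sigma n Is ts
  | InfSeq Is ts => valid_inf v Sigma I0 Is ts /\ fair v Sigma Is ts
  end.

Definition terminates (v : variant) (Sigma : list TGD) (s : ChaseSeq) : Prop :=
  match s with
  | FinSeq n Is ts => ~ can_extend v Sigma n Is ts
  | InfSeq _ _ => False
  end.

Definition CT (v : variant) (Sigma : list TGD) : Prop :=
  forall I0 s, is_chase_seq v Sigma I0 s -> terminates v Sigma s.

(* A semi-oblivious chase of Sigma becomes a standard chase of its
   semi-enrichment by adding, with each firing, the atom H_i(h(x)): this atom
   records the frontier image, so a trigger of the enrichment is active exactly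
   when no trigger of the same tgd with the same frontier image has fired, and
   fairness transfers because H_i(h(x)) and the head together satisfy every
   later equivalent trigger.  Conversely, removing the H atoms from an infinite
   standard chase of the enrichment leaves an infinite semi-oblivious derivation
   of Sigma that never fires two equivalent triggers.  It need not be fair,
   but interleaving its steps (with nulls renamed to even ones) with firings of
   the triggers it never fires (with odd nulls), trying every frontier image
   infinitely often, yields an infinite fair semi-oblivious chase. *)

From Stdlib Require Import List Arith Bool Lia.
From Stdlib Require Import ClassicalEpsilon IndefiniteDescription Cantor.
Import ListNotations.

Lemma map_injective {A B} (f : A -> B) :
  (forall x y, f x = f y -> x = y) -> forall l1 l2, map f l1 = map f l2 -> l1 = l2.
Proof.
  intros Hf l1; induction l1 as [|x l1 IH]; intros [|y l2] H; inversion H; auto.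
  f_equal; auto.
Qed.

Lemma map_eq_In {A B} (f g : A -> B) l x : map f l = map g l -> In x l -> f x = g x.
Proof.
  induction l as [|y l IH]; simpl; intros H Hx; [destruct Hx|].
  injection H as Hy Hl. destruct Hx as [<-|Hx]; auto.
Qed.

Definition tgd_at (Sg : list TGD) (i : nat) : TGD := nth i Sg (mkTGD [] []).

Lemma tgd_at_nth_error Sg i xi : nth_error Sg i = Some xi -> tgd_at Sg i = xi.
Proof. apply nth_error_nth. Qed.

Lemma in_frontier xi x :
  In x (frontier xi) <-> In x (body_vars xi) /\ In x (head_vars xi).
Proof.
  unfold frontier. rewrite nodup_In, filter_In, existsb_exists.
  split; intros [Hb Hh]; split; auto.
  - destruct Hh as [y [Hy Hxy]]. apply Nat.eqb_eq in Hxy. subst; auto.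
  - exists x. rewrite Nat.eqb_refl. auto.
Qed.

Lemma frontier_body_vars xi x : In x (frontier xi) -> In x (body_vars xi).
Proof. rewrite in_frontier. tauto. Qed.

Lemma head_vars_enrich_tgd i xi :
  head_vars (enrich_tgd i xi) = head_vars xi ++ frontier xi.
Proof.
  unfold head_vars, enrich_tgd; simpl. rewrite flat_map_app; simpl.
  rewrite app_nil_r. reflexivity.
Qed.

Lemma frontier_enrich_tgd i xi : frontier (enrich_tgd i xi) = frontier xi.
Proof.
  unfold frontier at 1. rewrite head_vars_enrich_tgd.
  change (body_vars (enrich_tgd i xi)) with (body_vars xi).
  unfold frontier. f_equal. apply filter_ext_in. intros x Hx.
  rewrite existsb_app. destruct (existsb (Nat.eqb x) (head_vars xi)) eqn:Eh; auto.
  simpl. apply not_true_is_false. intro Ef.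
  apply existsb_exists in Ef as [y [Hy Hxy]]. apply Nat.eqb_eq in Hxy; subst y.
  apply in_frontier in Hy as [_ Hy].
  apply not_true_iff_false in Eh. apply Eh, existsb_exists.
  exists x. rewrite Nat.eqb_refl. auto.
Qed.

Lemma existential_enrich_tgd i xi z : existential (enrich_tgd i xi) z <-> existential xi z.
Proof.
  unfold existential. rewrite head_vars_enrich_tgd, in_app_iff.
  change (body_vars (enrich_tgd i xi)) with (body_vars xi).
  split; [|tauto].
  intros [[Hz|Hz] Hb]; [tauto|]. apply frontier_body_vars in Hz. tauto.
Qed.

Lemma nth_error_enrich_aux L : forall j i,
  nth_error (enrich_aux j L) i = option_map (enrich_tgd (j + i)) (nth_error L i).
Proof.
  induction L as [|xi L IH]; intros j [|i]; simpl; auto.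
  - rewrite Nat.add_0_r. reflexivity.
  - rewrite IH, <- plus_n_Sm. reflexivity.
Qed.

Lemma nth_error_semi_enrichment Sg i :
  nth_error (semi_enrichment Sg) i = option_map (enrich_tgd i) (nth_error Sg i).
Proof. apply nth_error_enrich_aux. Qed.

(* The witness agrees with [g] on the body and with [h'] elsewhere; the two
   meet only on the frontier, where they agree by hypothesis. *)
Lemma satisfied_ext_enrich_tgd i xi I g h' :
  (forall x, In x (frontier xi) -> h' x = g x) ->
  (forall a, In a (head xi) -> In (inst h' a) I) ->
  In (mkAtom (RH i) (map g (frontier xi))) I ->
  satisfied_ext (enrich_tgd i xi) I g.
Proof.
  intros Hfr Hhead HH.
  exists (fun v => if in_dec Nat.eq_dec v (body_vars xi) then g v else h' v). split.
  - intros x Hx. destruct (in_dec Nat.eq_dec x (body_vars xi)); tauto.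
  - intros a Ha. apply in_app_or in Ha as [Ha|[<-|[]]].
    + replace (inst _ a) with (inst h' a); auto.
      unfold inst. f_equal. apply map_ext_in. intros v Hv.
      destruct (in_dec Nat.eq_dec v (body_vars xi)) as [Hb|]; auto.
      apply Hfr, in_frontier. split; auto.
      apply in_flat_map. eauto.
    + unfold inst; simpl. replace (map _ (frontier xi)) with (map g (frontier xi)); auto.
      apply map_ext_in. intros v Hv.
      destruct (in_dec Nat.eq_dec v (body_vars xi)) as [|Hb]; auto.
      exfalso. apply Hb, frontier_body_vars; auto.
Qed.

Definition fires_by (xi : TGD) (I : Instance) (h h' : nat -> Term) (J : Instance) : Prop :=
  extends_on xi h' h /\
  (forall z, existential xi z -> exists n, h' z = Null n /\ ~ null_in n I) /\
  (forall z1 z2, existential xi z1 -> existential xi z2 -> h' z1 = h' z2 -> z1 = z2) /\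
  J = I ++ map (inst h') (head xi).

Definition step_by (v : variant) (Sg : list TGD) (I : Instance) (t : Trigger)
    (h' : nat -> Term) (J : Instance) : Prop :=
  exists xi, nth_error Sg (fst t) = Some xi /\ hom_body xi I (snd t) /\
    (v = Std -> ~ satisfied_ext xi I (snd t)) /\ fires_by xi I (snd t) h' J.

Lemma step_of_step_by v Sg I t h' J : step_by v Sg I t h' J -> step v Sg I t J.
Proof. intros (xi & Hn & Hb & Ha & Hf). exists xi. repeat split; auto. exists h'; auto. Qed.

Lemma step_by_of_steps v Sg (I : nat -> Instance) (t : nat -> Trigger) :
  (forall k, step v Sg (I k) (t k) (I (S k))) ->
  exists hf, forall k, step_by v Sg (I k) (t k) (hf k) (I (S k)).
Proof.
  intros Hst. apply functional_choice with
    (R := fun k h' => step_by v Sg (I k) (t k) h' (I (S k))).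
  intro k. destruct (Hst k) as (xi & Hn & Hb & Ha & h' & Hf).
  exists h', xi. auto.
Qed.

Lemma derivation_incl v Sg (I : nat -> Instance) t hf :
  (forall k, step_by v Sg (I k) (t k) (hf k) (I (S k))) ->
  forall m n, m <= n -> incl (I m) (I n).
Proof.
  intros Hst m n Hmn. induction Hmn as [|n _ IH]; [apply incl_refl|].
  destruct (Hst n) as (xi & _ & _ & _ & _ & _ & _ & ->). apply incl_appl, IH.
Qed.

Lemma null_in_incl n I J : incl I J -> null_in n I -> null_in n J.
Proof. intros HIJ [a [Ha Hn]]. exists a; auto. Qed.

Lemma null_in_app n I J : null_in n (I ++ J) -> null_in n I \/ null_in n J.
Proof. intros [a [Ha Hn]]. apply in_app_or in Ha as [Ha|Ha]; [left|right]; exists a; auto. Qed.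

Lemma null_in_body xi I h x n :
  hom_body xi I h -> In x (body_vars xi) -> h x = Null n -> null_in n I.
Proof.
  intros Hb Hx Hhx. apply in_flat_map in Hx as [a [Ha Hxa]].
  exists (inst h a). split; auto. unfold inst; simpl. rewrite <- Hhx. apply in_map; auto.
Qed.

(** * Making an infinite semi-oblivious derivation fair *)

Definition even_null (x : Term) : Term :=
  match x with Const c => Const c | Null n => Null (2 * n) end.

Definition rename_atom (a : Atom) : Atom := mkAtom (arel a) (map even_null (aargs a)).

Lemma even_null_inj x y : even_null x = even_null y -> x = y.
Proof. destruct x, y; simpl; intro H; inversion H; f_equal; lia. Qed.

Lemma rename_atom_inst h a : rename_atom (inst h a) = inst (fun v => even_null (h v)) a.
Proof. unfold rename_atom, inst; simpl. rewrite map_map. reflexivity. Qed.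

Lemma null_in_rename m I : null_in (2 * m) (map rename_atom I) -> null_in m I.
Proof.
  intros [a [Ha Hm]]. apply in_map_iff in Ha as [b [<- Hb]].
  exists b. split; auto. simpl in Hm.
  apply in_map_iff in Hm as [[c|k] [Hk Hkb]]; inversion Hk.
  replace m with k by lia. auto.
Qed.

Definition null_bound (I : Instance) : nat :=
  list_sum (flat_map (fun a => map (fun x => match x with Null n => n | Const _ => 0 end)
                                   (aargs a)) I).

Lemma null_in_le_bound n I : null_in n I -> n <= null_bound I.
Proof.
  intros [a [Ha Hn]].
  assert (Hin : In n (flat_map (fun a => map (fun x => match x with Null n => n | Const _ => 0 end)
                                           (aargs a)) I)).
  { apply in_flat_map. exists a. split; auto. apply in_map_iff. exists (Null n); auto. }
  unfold null_bound. induction (flat_map _ I) as [|k l IH]; simpl in *; [tauto|].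
  destruct Hin as [->|Hin]; [lia|]. specialize (IH Hin). lia.
Qed.

Definition term_code (x : Term) : nat :=
  match x with Const c => 2 * c | Null n => S (2 * n) end.

Fixpoint list_code (l : list nat) : nat :=
  match l with [] => 0 | x :: l => S (Cantor.to_nat (x, list_code l)) end.

Definition key_code (c : nat * list Term) : nat :=
  Cantor.to_nat (fst c, list_code (map term_code (snd c))).

Lemma list_code_inj l1 l2 : list_code l1 = list_code l2 -> l1 = l2.
Proof.
  revert l2; induction l1 as [|x l1 IH]; intros [|y l2]; cbn [list_code]; intro H;
    try discriminate; auto.
  apply eq_add_S, Cantor.to_nat_inj in H. injection H as -> H. f_equal; auto.
Qed.

Lemma key_code_inj c1 c2 : key_code c1 = key_code c2 -> c1 = c2.
Proof.
  destruct c1 as [i1 l1], c2 as [i2 l2]. unfold key_code; cbn [fst snd]. intro H.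
  apply Cantor.to_nat_inj in H. injection H as -> H. apply list_code_inj in H.
  apply map_injective in H; [subst; reflexivity|].
  intros [] []; simpl; intro E; f_equal; lia.
Qed.

Section Fair_completion.
Variables (Sg : list TGD) (D : nat -> Instance) (t : nat -> Trigger) (hD : nat -> nat -> Term).
Hypothesis HD : forall k, step_by SObl Sg (D k) (t k) (hD k) (D (S k)).
Hypothesis HD_so : forall k l, k < l -> ~ so_equiv Sg (t k) (t l).

Definition key (tr : Trigger) : nat * list Term :=
  (fst tr, map (snd tr) (frontier (tgd_at Sg (fst tr)))).

Lemma key_of_so_equiv t1 t2 : so_equiv Sg t1 t2 -> key t1 = key t2.
Proof.
  intros [Hi [xi [Hn Hfr]]]. unfold key. rewrite <- Hi, (tgd_at_nth_error _ _ _ Hn), Hfr.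
  reflexivity.
Qed.

Lemma so_equiv_of_key t1 t2 :
  (exists xi, nth_error Sg (fst t2) = Some xi) -> key t1 = key t2 -> so_equiv Sg t1 t2.
Proof.
  intros [xi Hn] Hk. unfold key in Hk. injection Hk as Hi Hfr. split; auto.
  exists xi. rewrite Hi. split; auto.
  rewrite Hi, (tgd_at_nth_error _ _ _ Hn) in Hfr. exact Hfr.
Qed.

(* Step [m] of [D] is replayed with the nulls [n] renamed to [2 n]; the odd
   nulls are left for the triggers [D] never fires. *)
Definition replayed_trigger (m : nat) : Trigger :=
  (fst (t m), fun v => even_null (snd (t m) v)).

Definition replay_atoms (m : nat) : list Atom :=
  map (inst (fun v => even_null (hD m v))) (head (tgd_at Sg (fst (t m)))).

Definition replay_key (c : nat * list Term) : Prop := exists m, key (replayed_trigger m) = c.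

Definition pending (J : Instance) (fired : list (nat * list Term)) (tr : Trigger) : Prop :=
  is_trigger Sg J tr /\ ~ replay_key (key tr) /\ ~ In (key tr) fired.

Definition pick (J : Instance) (fired : list (nat * list Term)) (c : nat) : option Trigger :=
  match excluded_middle_informative
          (exists tr, pending J fired tr /\ key_code (key tr) = c) with
  | left H => Some (proj1_sig (constructive_indefinite_description _ H))
  | right _ => None
  end.

Lemma pick_some J fired c tr :
  pick J fired c = Some tr -> pending J fired tr /\ key_code (key tr) = c.
Proof.
  unfold pick. destruct excluded_middle_informative as [H|H]; intro E; inversion E.
  apply proj2_sig.
Qed.

Lemma pick_none J fired c tr :
  pick J fired c = None -> pending J fired tr -> key_code (key tr) <> c.
Proof.
  unfold pick. destruct excluded_middle_informative as [H|H]; intros E Hp Hc;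
    [discriminate|eauto].
Qed.

Definition fresh_ext (J : Instance) (tr : Trigger) (v : nat) : Term :=
  if in_dec Nat.eq_dec v (body_vars (tgd_at Sg (fst tr))) then snd tr v
  else Null (S (2 * (null_bound J + v))).

Definition fire_fresh (J : Instance) (tr : Trigger) : Instance :=
  J ++ map (inst (fresh_ext J tr)) (head (tgd_at Sg (fst tr))).

Record stage : Type :=
  Stage { stage_inst : Instance; stage_replayed : nat; stage_fired : list (nat * list Term) }.

(* Even steps replay [D]; step [2 q + 1] fires a pending trigger whose key has
   code [fst (Cantor.of_nat q)], if there is one, so that every code is tried
   infinitely often. *)
Definition scheduled (n : nat) (s : stage) : option Trigger :=
  if Nat.even n then None
  else pick (stage_inst s) (stage_fired s) (fst (Cantor.of_nat (Nat.div2 n))).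

Definition next_stage (n : nat) (s : stage) : stage :=
  match scheduled n s with
  | Some tr => Stage (fire_fresh (stage_inst s) tr) (stage_replayed s) (key tr :: stage_fired s)
  | None => Stage (stage_inst s ++ replay_atoms (stage_replayed s)) (S (stage_replayed s))
                  (stage_fired s)
  end.

Fixpoint stage_at (n : nat) : stage :=
  match n with
  | 0 => Stage (map rename_atom (D 0)) 0 []
  | S n => next_stage n (stage_at n)
  end.

Definition chase_inst (n : nat) : Instance := stage_inst (stage_at n).
Definition replayed (n : nat) : nat := stage_replayed (stage_at n).
Definition fired (n : nat) : list (nat * list Term) := stage_fired (stage_at n).

Definition chase_trigger (n : nat) : Trigger :=
  match scheduled n (stage_at n) with
  | Some tr => tr
  | None => replayed_trigger (replayed n)
  end.

Lemma stage_cases n :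
  (scheduled n (stage_at n) = None /\ chase_trigger n = replayed_trigger (replayed n) /\
   chase_inst (S n) = chase_inst n ++ replay_atoms (replayed n) /\
   replayed (S n) = S (replayed n) /\ fired (S n) = fired n) \/
  (exists tr, scheduled n (stage_at n) = Some tr /\ pending (chase_inst n) (fired n) tr /\
   chase_trigger n = tr /\ chase_inst (S n) = fire_fresh (chase_inst n) tr /\
   replayed (S n) = replayed n /\ fired (S n) = key tr :: fired n).
Proof.
  unfold chase_trigger, chase_inst, replayed, fired. simpl stage_at. unfold next_stage.
  destruct (scheduled n (stage_at n)) as [tr|] eqn:Hs; [right|left; auto].
  exists tr. split; [reflexivity|]. split; [|repeat split].
  unfold scheduled in Hs. destruct (Nat.even n); [discriminate|].
  apply pick_some in Hs. tauto.
Qed.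

Lemma scheduled_even p s : scheduled (2 * p) s = None.
Proof. unfold scheduled. rewrite Nat.even_even. reflexivity. Qed.

Lemma scheduled_odd q s :
  scheduled (S (2 * q)) s = pick (stage_inst s) (stage_fired s) (fst (Cantor.of_nat q)).
Proof.
  unfold scheduled. rewrite Nat.div2_succ_double.
  replace (S (2 * q)) with (2 * q + 1) by lia. rewrite Nat.even_odd. reflexivity.
Qed.

Lemma replay_atoms_spec m :
  map rename_atom (D (S m)) = map rename_atom (D m) ++ replay_atoms m.
Proof.
  destruct (HD m) as (xi & Hn & _ & _ & _ & _ & _ & ->).
  unfold replay_atoms. rewrite (tgd_at_nth_error _ _ _ Hn), map_app, map_map.
  f_equal. apply map_ext, rename_atom_inst.
Qed.

Lemma chase_inst_incl m n : m <= n -> incl (chase_inst m) (chase_inst n).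
Proof.
  induction 1 as [|n _ IH]; [apply incl_refl|].
  destruct (stage_cases n) as [(_ & _ & -> & _)|(tr & _ & _ & _ & -> & _)];
    apply incl_appl, IH.
Qed.

Lemma fired_incl m n : m <= n -> incl (fired m) (fired n).
Proof.
  induction 1 as [|n _ IH]; [apply incl_refl|].
  destruct (stage_cases n) as [(_ & _ & _ & _ & ->)|(tr & _ & _ & _ & _ & _ & ->)];
    auto using incl_tl.
Qed.

Lemma fired_spec n c : In c (fired n) -> exists j, j < n /\ key (chase_trigger j) = c.
Proof.
  induction n as [|n IH]; [intros []|].
  destruct (stage_cases n) as [(_ & _ & _ & _ & ->)|(tr & _ & _ & Ht & _ & _ & ->)].
  - intro Hc. destruct (IH Hc) as [j [Hj Hjc]]. exists j. split; auto.
  - intros [<-|Hc]; [exists n; rewrite Ht; auto|].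
    destruct (IH Hc) as [j [Hj Hjc]]. exists j. split; auto.
Qed.

Lemma replay_in_chase_inst n : incl (map rename_atom (D (replayed n))) (chase_inst n).
Proof.
  induction n as [|n IH]; [apply incl_refl|].
  destruct (stage_cases n) as [(_ & _ & -> & -> & _)|(tr & _ & _ & _ & -> & -> & _)].
  - rewrite replay_atoms_spec. apply incl_app; [apply incl_appl, IH|apply incl_appr, incl_refl].
  - apply incl_appl, IH.
Qed.

Lemma even_null_in_chase_inst n m :
  null_in (2 * m) (chase_inst n) -> null_in m (D (replayed n)).
Proof.
  induction n as [|n IH]; [apply null_in_rename|].
  destruct (stage_cases n) as [(_ & _ & -> & -> & _)|(tr & _ & Hp & _ & -> & -> & _)];
    intro Hm; apply null_in_app in Hm as [Hm|Hm]; auto.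
  - apply (null_in_incl _ (D (replayed n))); [apply (derivation_incl _ _ _ _ _ HD); lia|auto].
  - apply null_in_rename. rewrite replay_atoms_spec.
    apply (null_in_incl _ (replay_atoms (replayed n))); [apply incl_appr, incl_refl|auto].
  - destruct Hp as [[xi [Hn Hb]] _].
    destruct Hm as [a [Ha Hma]]. apply in_map_iff in Ha as [b [<- _]].
    apply in_map_iff in Hma as [x [Hx _]]. unfold fresh_ext in Hx.
    rewrite (tgd_at_nth_error _ _ _ Hn) in Hx.
    destruct (in_dec Nat.eq_dec x (body_vars xi)) as [Hbx|]; [|inversion Hx; lia].
    apply IH. eapply null_in_body; eauto.
Qed.

Lemma chase_step n : step SObl Sg (chase_inst n) (chase_trigger n) (chase_inst (S n)).
Proof.
  destruct (stage_cases n) as [(_ & -> & -> & _)|(tr & _ & Hp & -> & -> & _)].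
  - destruct (HD (replayed n)) as (xi & Hn & Hb & _ & Hext & Hfresh & Hdist & _).
    apply step_of_step_by with (fun v => even_null (hD (replayed n) v)).
    exists xi. split; [exact Hn|]. split; [|split; [discriminate|]].
    + intros a Ha. simpl. rewrite <- rename_atom_inst.
      apply replay_in_chase_inst, in_map, Hb, Ha.
    + split; [|split; [|split]].
      * intros x Hx. simpl. rewrite Hext; auto.
      * intros z Hz. destruct (Hfresh z Hz) as [k [-> Hk]].
        exists (2 * k). split; auto. intro Hnull. apply Hk, even_null_in_chase_inst, Hnull.
      * intros z1 z2 H1 H2 E. apply Hdist, even_null_inj; auto.
      * unfold replay_atoms. rewrite (tgd_at_nth_error _ _ _ Hn). reflexivity.
  - destruct Hp as [[xi [Hn Hb]] _].
    apply step_of_step_by with (fresh_ext (chase_inst n) tr).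
    exists xi. split; [exact Hn|]. split; [exact Hb|]. split; [discriminate|].
    unfold fresh_ext. rewrite (tgd_at_nth_error _ _ _ Hn). split; [|split; [|split]].
    + intros x Hx. destruct (in_dec Nat.eq_dec x (body_vars xi)); tauto.
    + intros z [_ Hz]. destruct (in_dec Nat.eq_dec z (body_vars xi)); [tauto|].
      eexists. split; [reflexivity|]. intro Hnull. apply null_in_le_bound in Hnull. lia.
    + intros z1 z2 [_ H1] [_ H2].
      destruct (in_dec Nat.eq_dec z1 (body_vars xi)); [tauto|].
      destruct (in_dec Nat.eq_dec z2 (body_vars xi)); [tauto|].
      intro E. inversion E. lia.
    + unfold fire_fresh, fresh_ext. rewrite (tgd_at_nth_error _ _ _ Hn). reflexivity.
Qed.

Lemma replayed_incl m n : m <= n -> replayed m <= replayed n.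
Proof.
  induction 1 as [|n _ IH]; auto.
  destruct (stage_cases n) as [(_ & _ & _ & -> & _)|(tr & _ & _ & _ & _ & -> & _)]; lia.
Qed.

Lemma replayed_double p : p <= replayed (2 * p).
Proof.
  induction p as [|p IH]; [lia|].
  destruct (stage_cases (2 * p)) as [(_ & _ & _ & E & _)|(tr & Hs & _)];
    [|rewrite scheduled_even in Hs; discriminate].
  pose proof (replayed_incl (S (2 * p)) (2 * S p) ltac:(lia)). lia.
Qed.

Lemma every_step_replayed m : exists n, chase_trigger n = replayed_trigger m.
Proof.
  assert (Hcross : forall N, m < replayed N -> exists n, replayed n = m /\ replayed (S n) = S m).
  { induction N as [|N IH]; intro HN; [change (replayed 0) with 0 in HN; lia|].
    destruct (Nat.lt_ge_cases m (replayed N)) as [Hlt|Hge]; auto.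
    exists N.
    destruct (stage_cases N) as [(_ & _ & _ & E & _)|(tr & _ & _ & _ & _ & E & _)]; lia. }
  destruct (Hcross (2 * S m)) as [n [E1 E2]]; [pose proof (replayed_double (S m)); lia|].
  exists n.
  destruct (stage_cases n) as [(_ & -> & _)|(tr & _ & _ & _ & _ & E & _)]; [|lia].
  rewrite E1. reflexivity.
Qed.

Lemma so_equiv_replayed m1 m2 :
  so_equiv Sg (replayed_trigger m1) (replayed_trigger m2) -> so_equiv Sg (t m1) (t m2).
Proof.
  intros [Hi [xi [Hn Hfr]]]. split; auto. exists xi. split; auto.
  simpl in Hfr.
  rewrite <- (map_map (snd (t m1)) even_null), <- (map_map (snd (t m2)) even_null) in Hfr.
  apply (map_injective _ even_null_inj) in Hfr. exact Hfr.
Qed.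

Lemma chase_no_so_equiv j l : j < l -> ~ so_equiv Sg (chase_trigger j) (chase_trigger l).
Proof.
  intros Hjl Hso. pose proof (key_of_so_equiv _ _ Hso) as Hkey.
  destruct (stage_cases j) as [(_ & Hj & _ & Ej & _)|(trj & _ & [_ [Hrj _]] & Hj & _ & _ & Ej)];
  destruct (stage_cases l) as [(_ & Hl & _)|(trl & _ & [_ [Hrl Hfl]] & Hl & _)];
  rewrite Hj, Hl in Hso, Hkey.
  - pose proof (replayed_incl (S j) l Hjl).
    apply (HD_so (replayed j) (replayed l)); [lia|]. apply so_equiv_replayed, Hso.
  - apply Hrl. exists (replayed j). exact Hkey.
  - apply Hrj. exists (replayed l). symmetry. exact Hkey.
  - apply Hfl. rewrite <- Hkey. apply (fired_incl (S j)); [lia|]. rewrite Ej. left; auto.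
Qed.

(* A trigger whose key is neither replayed nor fired stays pending, so it is
   fired at any step [2 q + 1 >= k] that tries its code. *)
Lemma chase_fair k tr :
  is_trigger Sg (chase_inst k) tr -> exists j, so_equiv Sg (chase_trigger j) tr.
Proof.
  intros Htr.
  enough (exists j, key (chase_trigger j) = key tr) as [j Hj].
  { exists j. apply so_equiv_of_key; auto. destruct Htr as [xi [Hn _]]. eauto. }
  destruct (classic (replay_key (key tr))) as [[m Hm]|Hnr].
  { destruct (every_step_replayed m) as [n Hn]. exists n. rewrite Hn. exact Hm. }
  set (q := Cantor.to_nat (key_code (key tr), k)).
  assert (Hkq : k <= S (2 * q))
    by (pose proof (Cantor.to_nat_non_decreasing (key_code (key tr)) k); lia).
  destruct (classic (In (key tr) (fired (S (2 * q))))) as [Hin|Hout].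
  { destruct (fired_spec _ _ Hin) as [j [_ Hj]]. eauto. }
  assert (Hp : pending (chase_inst (S (2 * q))) (fired (S (2 * q))) tr).
  { split; [|split; auto]. destruct Htr as [xi [Hn Hb]].
    exists xi. split; auto. intros a Ha. apply (chase_inst_incl k); auto. }
  exists (S (2 * q)).
  destruct (stage_cases (S (2 * q))) as [(Hs & _)|(tr' & Hs & _ & -> & _)];
    rewrite scheduled_odd in Hs; unfold q in Hs; rewrite Cantor.cancel_of_to in Hs; simpl in Hs.
  - exfalso. apply (pick_none _ _ _ _ Hs Hp). reflexivity.
  - apply key_code_inj. apply pick_some in Hs. tauto.
Qed.

Lemma not_CT_SObl_of_derivation : ~ CT SObl Sg.
Proof.
  intros HC. apply (HC (chase_inst 0) (InfSeq chase_inst chase_trigger)).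
  split; [split; [reflexivity|split; [apply chase_step|]]|].
  - intros _. apply chase_no_so_equiv.
  - exact chase_fair.
Qed.

End Fair_completion.

Definition is_R_atom (a : Atom) : bool :=
  match arel a with RBase _ => true | RH _ => false end.

Definition strip (I : Instance) : Instance := filter is_R_atom I.

Section Over_R.
Variable Sg : list TGD.
Hypothesis HR : forall xi, In xi Sg -> over_R xi.

Lemma R_atom_body i xi h a :
  nth_error Sg i = Some xi -> In a (body xi) -> is_R_atom (inst h a) = true.
Proof.
  intros Hn Ha. destruct (proj1 (HR xi (nth_error_In _ _ Hn)) a Ha) as [r Hr].
  unfold is_R_atom, inst; simpl. rewrite Hr. reflexivity.
Qed.

Lemma R_atom_head i xi h a :
  nth_error Sg i = Some xi -> In a (head xi) -> is_R_atom (inst h a) = true.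
Proof.
  intros Hn Ha. destruct (proj2 (HR xi (nth_error_In _ _ Hn)) a Ha) as [r Hr].
  unfold is_R_atom, inst; simpl. rewrite Hr. reflexivity.
Qed.

(** * From a fair semi-oblivious chase to a fair standard chase of the enrichment *)

Section Enrich_chase.
Variables (I : nat -> Instance) (t : nat -> Trigger) (hf : nat -> nat -> Term).
Hypothesis Hsteps : forall k, step_by SObl Sg (I k) (t k) (hf k) (I (S k)).
Hypothesis Hso : forall k l, k < l -> ~ so_equiv Sg (t k) (t l).
Hypothesis Hfair : forall k tr, is_trigger Sg (I k) tr -> exists j, so_equiv Sg (t j) tr.

Definition H_atom (k : nat) : Atom :=
  mkAtom (RH (fst (t k))) (map (snd (t k)) (frontier (tgd_at Sg (fst (t k))))).

(* [strip] discards the [H] atoms an arbitrary initial instance may contain. *)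
Fixpoint enriched (k : nat) : Instance :=
  match k with
  | 0 => strip (I 0)
  | S k => enriched k ++
      map (inst (hf k)) (head (enrich_tgd (fst (t k)) (tgd_at Sg (fst (t k)))))
  end.

Lemma enriched_incl m n : m <= n -> incl (enriched m) (enriched n).
Proof. induction 1; [apply incl_refl|]. simpl. apply incl_appl; auto. Qed.

Lemma inst_H_atom k :
  inst (hf k) (mkVAtom (RH (fst (t k))) (frontier (tgd_at Sg (fst (t k))))) = H_atom k.
Proof.
  destruct (Hsteps k) as (xi & Hn & _ & _ & Hext & _).
  unfold inst, H_atom; simpl. rewrite (tgd_at_nth_error _ _ _ Hn). f_equal.
  apply map_ext_in. intros v Hv. apply Hext, frontier_body_vars; auto.
Qed.

Lemma in_enriched k a : In a (enriched k) ->
  (is_R_atom a = true /\ In a (I k)) \/ (exists m, m < k /\ a = H_atom m).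
Proof.
  induction k as [|k IH]; simpl; intro Ha.
  - apply filter_In in Ha. tauto.
  - apply in_app_or in Ha as [Ha|Ha].
    + destruct (IH Ha) as [[HR' HI]|[m [Hm ->]]].
      * left. split; auto. apply (derivation_incl _ _ _ _ _ Hsteps k); auto.
      * right. exists m. split; auto.
    + apply in_map_iff in Ha as [b [<- Hb]].
      destruct (Hsteps k) as (xi & Hn & _ & _ & _ & _ & _ & HI).
      rewrite (tgd_at_nth_error _ _ _ Hn) in Hb.
      apply in_app_or in Hb as [Hb|[<-|[]]].
      * left. split; [eapply R_atom_head; eauto|].
        rewrite HI. apply in_or_app; right. apply in_map; auto.
      * right. exists k. split; auto. rewrite <- inst_H_atom, (tgd_at_nth_error _ _ _ Hn). auto.
Qed.

Lemma R_atom_in_enriched k a : is_R_atom a = true -> In a (I k) -> In a (enriched k).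
Proof.
  intros HRa. induction k as [|k IH]; simpl; intro Ha.
  - apply filter_In. auto.
  - destruct (Hsteps k) as (xi & Hn & _ & _ & _ & _ & _ & HI).
    rewrite HI in Ha. apply in_app_or in Ha as [Ha|Ha]; apply in_or_app; auto.
    right. rewrite (tgd_at_nth_error _ _ _ Hn).
    apply in_map_iff in Ha as [b [<- Hb]]. apply in_map, in_or_app; auto.
Qed.

Lemma H_atom_in_enriched k : In (H_atom k) (enriched (S k)).
Proof.
  simpl. apply in_or_app; right. rewrite <- inst_H_atom. apply in_map.
  apply in_or_app; right. left; reflexivity.
Qed.

Lemma null_in_enriched k n : null_in n (enriched k) -> null_in n (I k).
Proof.
  intros [a [Ha Hna]]. destruct (in_enriched k a Ha) as [[_ HI]|[m [Hm ->]]].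
  - exists a; auto.
  - destruct (Hsteps m) as (xi & Hn & Hb & _).
    unfold H_atom in Hna; simpl in Hna. rewrite (tgd_at_nth_error _ _ _ Hn) in Hna.
    apply in_map_iff in Hna as [x [Hx Hxf]].
    apply (null_in_incl _ (I m)); [apply (derivation_incl _ _ _ _ _ Hsteps); lia|].
    eapply null_in_body; eauto. apply frontier_body_vars; auto.
Qed.

(* The trigger of step [k] is active: its [H] atom could only come from an
   earlier step with the same tgd and frontier image. *)
Lemma enriched_step k :
  step_by Std (semi_enrichment Sg) (enriched k) (t k) (hf k) (enriched (S k)).
Proof.
  destruct (Hsteps k) as (xi & Hn & Hb & _ & Hext & Hfresh & Hdist & _).
  exists (enrich_tgd (fst (t k)) xi).
  split; [rewrite nth_error_semi_enrichment, Hn; reflexivity|].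
  split; [|split].
  - intros a Ha. apply R_atom_in_enriched; [eapply R_atom_body; eauto | apply Hb; auto].
  - intros _ [g [Hg Hhead]].
    assert (HH : In (inst g (mkVAtom (RH (fst (t k))) (frontier xi))) (enriched k))
      by (apply Hhead, in_or_app; right; left; reflexivity).
    apply in_enriched in HH as [[Hc _]|[m [Hm Heq]]]; [discriminate|].
    unfold inst, H_atom in Heq; simpl in Heq. injection Heq as Hi Hfr.
    apply (Hso m k Hm). split; auto.
    rewrite <- Hi, (tgd_at_nth_error _ _ _ Hn) in Hfr.
    exists xi. rewrite <- Hi. split; auto. rewrite <- Hfr.
    apply map_ext_in. intros v Hv. apply Hg, frontier_body_vars.
    rewrite frontier_enrich_tgd. auto.
  - split; [exact Hext|]. split; [|split].
    + intros z Hz. apply existential_enrich_tgd in Hz.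
      destruct (Hfresh z Hz) as [n [Hz' Hn']].
      exists n. split; auto. intro Hnull. apply Hn', null_in_enriched; auto.
    + intros z1 z2 H1 H2. apply existential_enrich_tgd in H1, H2. auto.
    + simpl. rewrite (tgd_at_nth_error _ _ _ Hn). reflexivity.
Qed.

(* An active trigger of the enrichment is a trigger of [Sg]; once the
   semi-oblivious chase has fired an equivalent trigger, its head and its
   [H] atom are present. *)
Lemma enriched_fair : fair Std (semi_enrichment Sg) enriched t.
Proof.
  simpl. intros k tr (xe & Hn & Hb & _).
  rewrite nth_error_semi_enrichment in Hn.
  destruct (nth_error Sg (fst tr)) as [xi|] eqn:Hxi; simpl in Hn; inversion Hn; subst xe.
  assert (Htr : is_trigger Sg (I k) tr).
  { exists xi. split; auto. intros a Ha.
    destruct (in_enriched k _ (Hb a Ha)) as [[_ HI]|[m [_ Hm]]]; auto.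
    assert (HRa := R_atom_body _ _ (snd tr) _ Hxi Ha).
    rewrite Hm in HRa. discriminate. }
  destruct (Hfair k tr Htr) as [j [Hj [xi' [Hn' Hfr]]]].
  rewrite Hj, Hxi in Hn'. injection Hn' as <-.
  exists (max k (S j)). split; [lia|].
  intros (xe & Hn2 & _ & Hns). apply Hns.
  rewrite nth_error_semi_enrichment, Hxi in Hn2. injection Hn2 as <-.
  destruct (Hsteps j) as (xj & Hnj & _ & _ & Hext & _ & _ & HI).
  rewrite Hj, Hxi in Hnj. injection Hnj as <-.
  assert (Hincl : incl (enriched (S j)) (enriched (max k (S j)))) by (apply enriched_incl; lia).
  apply satisfied_ext_enrich_tgd with (h' := hf j).
  - intros x Hx. rewrite Hext by (apply (frontier_body_vars xi); auto).
    apply (map_eq_In _ _ _ _ Hfr Hx).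
  - intros a Ha. apply Hincl, R_atom_in_enriched; [eapply R_atom_head; eauto|].
    rewrite HI. apply in_or_app; right. apply in_map; auto.
  - apply Hincl. replace (mkAtom _ _) with (H_atom j); [apply H_atom_in_enriched|].
    unfold H_atom. rewrite Hj, (tgd_at_nth_error _ _ _ Hxi), Hfr. reflexivity.
Qed.

End Enrich_chase.

Lemma CT_SObl_of_CT_Std_semi_enrichment : CT Std (semi_enrichment Sg) -> CT SObl Sg.
Proof.
  intros HC I0 [n Is ts|Is ts] Hs; simpl in *; [tauto|].
  destruct Hs as [[_ [Hst Hso]] Hfair].
  destruct (step_by_of_steps _ _ _ _ Hst) as [hf Hhf].
  apply (HC (enriched Is ts hf 0) (InfSeq (enriched Is ts hf) ts)).
  split; [|apply enriched_fair; auto].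
  split; [reflexivity|]. split; [|discriminate].
  intro k. apply step_of_step_by with (hf k). apply enriched_step; auto.
Qed.

(** * From a standard chase of the enrichment to a semi-oblivious derivation *)

Section Strip_chase.
Variables (I : nat -> Instance) (t : nat -> Trigger) (hf : nat -> nat -> Term).
Hypothesis Hsteps : forall k, step_by Std (semi_enrichment Sg) (I k) (t k) (hf k) (I (S k)).

Lemma strip_step k : step_by SObl Sg (strip (I k)) (t k) (hf k) (strip (I (S k))).
Proof.
  destruct (Hsteps k) as (xe & Hn & Hb & _ & Hext & Hfresh & Hdist & HI).
  rewrite nth_error_semi_enrichment in Hn.
  destruct (nth_error Sg (fst (t k))) as [xi|] eqn:Hxi; simpl in Hn; inversion Hn; subst xe.
  exists xi. split; auto. split; [|split; [discriminate|]].
  { intros a Ha. apply filter_In. split; [apply Hb; auto|eapply R_atom_body; eauto]. }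
  split; [exact Hext|]. split; [|split].
  - intros z Hz. destruct (Hfresh z (proj2 (existential_enrich_tgd _ _ _) Hz)) as [n [Hz' Hn']].
    exists n. split; auto. intro Hnull. apply Hn'.
    apply (null_in_incl _ (strip (I k))); auto. intros a Ha. apply filter_In in Ha. tauto.
  - intros z1 z2 H1 H2. apply Hdist; apply existential_enrich_tgd; auto.
  - rewrite HI. unfold strip. rewrite filter_app. f_equal.
    simpl. rewrite map_app, filter_app. simpl. rewrite app_nil_r.
    apply forallb_filter_id, forallb_forall. intros x Hx.
    apply in_map_iff in Hx as [a [<- Ha]]. eapply R_atom_head; eauto.
Qed.

(* A later trigger with the same key would already be satisfied, through the
   head and the [H] atom produced by the earlier one. *)
Lemma strip_no_so_equiv k l : k < l -> ~ so_equiv Sg (t k) (t l).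
Proof.
  intros Hkl [Hi [xi [Hn Hfr]]].
  destruct (Hsteps l) as (xl & Hnl & _ & Hact & _).
  rewrite nth_error_semi_enrichment, <- Hi, Hn in Hnl. injection Hnl as <-.
  apply Hact; [reflexivity|].
  destruct (Hsteps k) as (xk & Hnk & _ & _ & Hext & _ & _ & HI).
  rewrite nth_error_semi_enrichment, Hn in Hnk. injection Hnk as <-.
  assert (Hincl : incl (I (S k)) (I l)) by (apply (derivation_incl _ _ _ _ _ Hsteps); lia).
  apply satisfied_ext_enrich_tgd with (h' := hf k).
  - intros x Hx. rewrite Hext by (apply (frontier_body_vars xi); auto).
    apply (map_eq_In _ _ _ _ Hfr Hx).
  - intros a Ha. apply Hincl. rewrite HI. apply in_or_app; right. apply in_map.
    apply in_or_app; left; auto.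
  - apply Hincl. rewrite HI. apply in_or_app; right. apply in_map_iff.
    exists (mkVAtom (RH (fst (t k))) (frontier xi)). split.
    + unfold inst; simpl. f_equal. rewrite <- Hfr. apply map_ext_in.
      intros v Hv. apply Hext, (frontier_body_vars xi); auto.
    + apply in_or_app; right; left; reflexivity.
Qed.

End Strip_chase.

Lemma CT_Std_semi_enrichment_of_CT_SObl : CT SObl Sg -> CT Std (semi_enrichment Sg).
Proof.
  intros HC I0 [n Is ts|Is ts] Hs; simpl in *; [tauto|].
  destruct Hs as [[_ [Hst _]] _].
  destruct (step_by_of_steps _ _ _ _ Hst) as [hf Hhf].
  destruct (step_by_of_steps SObl Sg (fun k => strip (Is k)) ts) as [hD HD].
  { intro k. apply step_of_step_by with (hf k). apply strip_step; auto. }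
  exact (not_CT_SObl_of_derivation Sg _ ts hD HD (strip_no_so_equiv Is ts hf Hhf) HC).
Qed.

End Over_R.

Theorem theorem10 (Sigma : list TGD) (HR : forall xi, In xi Sigma -> over_R xi) :
  CT SObl Sigma <-> CT Std (semi_enrichment Sigma).
Proof.
  split.
  - apply CT_Std_semi_enrichment_of_CT_SObl; auto.
  - apply CT_SObl_of_CT_Std_semi_enrichment; auto.
Qed.
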